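(* Let $\delta\ge0$, $\rho\in(0,1]$ and $\Pi\in\mathscr P_\delta(\Pi^* )$. Put $S_{\Pi,\rho}=(I+\rho^{-2}\Pi)^{1/2}$, $P^*_\rho=(I+\rho^{-2}\Pi^* )^{-1/2}$, $U=P^*_\rho S_{\Pi,\rho}^2P^*_\rho$, $U^*=I$ and $\alpha=2\delta^2\rho^{-2}+2\delta\rho^{-1}$. Then $\|U-U^*\|_2\le\alpha$.
   Context: $\Pi^*$ is the orthogonal projector onto an $m^*$-dimensional subspace of $\mathbb R^d$; $I$ is the $d\times d$ identity; $\|A\|_2$ is the Frobenius norm; $A\preceq B$ means $B-A$ is positive semidefinite; matrix square roots are positive semidefinite square roots. $\mathscr P_\delta(\Pi^* )=\{\Pi\in\mathbb R^{d\times d}\text{ symmetric}:\operatorname{tr}\Pi\le m^*,\ 0\preceq\Pi\preceq I,\ \operatorname{tr}((I-\Pi)\Pi^* )\le\delta^2\}$. Note $P^*_\rho=(I-\Pi^* )+\rho(1+\rho^2)^{-1/2}\Pi^*$. *)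

From HB Require Import structures.
From mathcomp Require Import all_boot all_order all_algebra.
Set Implicit Arguments. Unset Strict Implicit. Unset Printing Implicit Defensive.
Import Order.TTheory GRing.Theory Num.Theory.
Local Open Scope ring_scope.

Definition symmetric_mx (R : rcfType) (n : nat) (A : 'M[R]_n) : Prop := A^T = A.

Definition psd (R : rcfType) (n : nat) (A : 'M[R]_n) : Prop :=
  symmetric_mx A /\ forall x : 'cV[R]_n, 0 <= (x^T *m A *m x) 0 0.

Definition loewner_le (R : rcfType) (n : nat) (A B : 'M[R]_n) : Prop := psd (B - A).

Definition is_psd_sqrt (R : rcfType) (n : nat) (S A : 'M[R]_n) : Prop :=
  psd S /\ S *m S = A.

Definition frob (R : rcfType) (m n : nat) (A : 'M[R]_(m, n)) : R :=
  Num.sqrt (\sum_(i < m) \sum_(j < n) A i j ^+ 2).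

Definition orth_proj (R : rcfType) (n : nat) (P : 'M[R]_n) : Prop :=
  P^T = P /\ P *m P = P.

(* The set P_delta(Pistar), m = dimension of the range of Pistar. *)
Definition Pdelta (R : rcfType) (d m : nat) (delta : R) (Pstar Pi : 'M[R]_d) : Prop :=
  symmetric_mx Pi /\ \tr Pi <= m%:R /\ loewner_le 0 Pi /\ loewner_le Pi 1%:M /\
  \tr ((1%:M - Pi) *m Pstar) <= delta ^+ 2.

(* Write r = rho^-2, E = Pstar, Q = 1 - E and B = 1 - Pi. The matrices
   a Q + b E multiply coefficientwise, so P = Q + c E with c = (1 + r)^-1/2:
   P commutes with P^2 = Q + c^2 E, hence with E, and commuting positive
   semidefinite square roots of a positive definite matrix coincide. Then
     P (1 + r Pi) P - 1 = r (Q Pi Q - c (Q B E + E B Q) - c^2 E B E).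
   The diagonal blocks are positive semidefinite, so their Frobenius norms are
   bounded by their traces tr Pi - tr (Pi E) <= tr (B E) (as tr Pi <= m = tr E)
   and tr (B E), both at most delta^2; and |Q B E|^2 <= tr (E B^2 E) <= tr (E B E)
   because 0 <= B <= 1. It remains to use c <= 1 and r c <= rho^-1. *)

From HB Require Import structures.
From mathcomp Require Import all_boot all_order all_algebra.
From mathcomp Require Import ring lra.
Import Order.TTheory GRing.Theory Num.Theory.
Set Implicit Arguments. Unset Strict Implicit. Unset Printing Implicit Defensive.
Local Open Scope ring_scope.

Lemma mxtrace_idem (F : fieldType) n (A : 'M[F]_n) :
  A *m A = A -> \tr A = (\rank A)%:R.
Proof.
move=> AA; rewrite -{1}(mulmx_base A) mxtrace_mulC.
suff -> : row_base A *m col_base A = 1%:M by rewrite mxtrace1.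
apply: (row_full_inj (col_base_full A)); apply: (row_free_inj (row_base_free A)).
by rewrite mulmx1 mulmx_base (mulmxA (col_base A)) mulmx_base -mulmxA mulmx_base AA.
Qed.

Lemma delta_mx_form (R : pzRingType) n (A : 'M[R]_n) i j :
  ((delta_mx 0 i : 'rV_n) *m A *m (delta_mx j 0 : 'cV_n)) 0 0 = A i j.
Proof. by rewrite -rowE -colE !mxE. Qed.

Lemma discr_le0 (R : realFieldType) (a b c : R) : 0 <= c ->
  (forall t, 0 <= a + 2 * b * t + c * t ^+ 2) -> b ^+ 2 <= a * c.
Proof.
move=> c_ge0 q_ge0; have [c0|c_neq0] := eqVneq c 0.
  rewrite c0 mulr0; have [->|b_neq0] := eqVneq b 0; first by rewrite expr0n.
  have := q_ge0 (- (a + 1) / (2 * b)).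
  have -> : a + 2 * b * (- (a + 1) / (2 * b)) + c * (- (a + 1) / (2 * b)) ^+ 2 = -1.
    by rewrite c0; field.
  by rewrite ler0N1.
have c_gt0 : 0 < c by rewrite lt_def c_neq0.
have := q_ge0 (- b / c).
have -> : a + 2 * b * (- b / c) + c * (- b / c) ^+ 2 = (a * c - b ^+ 2) / c by field.
by rewrite pmulr_lge0 ?invr_gt0 // subr_ge0.
Qed.

Section FrobeniusPsd.
Variable R : rcfType.

Lemma mxtrace_tmul m n (A : 'M[R]_(m, n)) :
  \tr (A^T *m A) = \sum_i \sum_j A i j ^+ 2.
Proof.
rewrite /mxtrace exchange_big; apply: eq_bigr => j _; rewrite !mxE.
by apply: eq_bigr => i _; rewrite !mxE expr2.
Qed.

Lemma mxtrace_tmul_ge0 m n (A : 'M[R]_(m, n)) : 0 <= \tr (A^T *m A).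
Proof. by rewrite mxtrace_tmul; do 2![apply: sumr_ge0 => ? _]; exact: sqr_ge0. Qed.

Lemma frob_ge0 m n (A : 'M[R]_(m, n)) : 0 <= frob A.
Proof. exact: sqrtr_ge0. Qed.

Lemma frob_sqr m n (A : 'M[R]_(m, n)) : frob A ^+ 2 = \tr (A^T *m A).
Proof. by rewrite /frob -mxtrace_tmul sqr_sqrtr ?mxtrace_tmul_ge0. Qed.

Lemma frob0_eq0 m n (A : 'M[R]_(m, n)) : frob A = 0 -> A = 0.
Proof.
move/eqP; rewrite -sqrf_eq0 frob_sqr mxtrace_tmul => /eqP sum0.
have row_ge0 i : true -> 0 <= \sum_j A i j ^+ 2.
  by move=> _; apply: sumr_ge0 => j _; exact: sqr_ge0.
apply/matrixP => i j; rewrite mxE.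
have row0 := psumr_eq0P row_ge0 sum0 (i := i) isT.
have /eqP := psumr_eq0P (fun j _ => sqr_ge0 (A i j)) row0 (i := j) isT.
by rewrite sqrf_eq0 => /eqP.
Qed.

Lemma frob_trmx m n (A : 'M[R]_(m, n)) : frob A^T = frob A.
Proof. by rewrite /frob -!mxtrace_tmul trmxK mxtrace_mulC. Qed.

Lemma frobZ m n a (A : 'M[R]_(m, n)) : frob (a *: A) = `|a| * frob A.
Proof.
rewrite /frob -!mxtrace_tmul [(a *: A)^T]linearZ /= -scalemxAl -scalemxAr.
by rewrite !mxtraceZ mulrA -expr2 sqrtrM ?sqr_ge0 // sqrtr_sqr.
Qed.

Lemma frobN m n (A : 'M[R]_(m, n)) : frob (- A) = frob A.
Proof. by rewrite -scaleN1r frobZ normrN normr1 mul1r. Qed.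

Section PsdForm.
Variables (n : nat) (A : 'M[R]_n).
Hypothesis psdA : psd A.

Lemma psd_mxtrace_form_ge0 k (X : 'M[R]_(n, k)) : 0 <= \tr (X^T *m A *m X).
Proof.
apply: sumr_ge0 => j _; case: psdA => _ /(_ (col j X)).
by rewrite -(delta_mx_form (X^T *m A *m X)) colE trmx_mul trmx_delta !mulmxA.
Qed.

Lemma psd_mxtrace_form_CS k (X Y : 'M[R]_(n, k)) :
  \tr (X^T *m A *m Y) ^+ 2 <= \tr (X^T *m A *m X) * \tr (Y^T *m A *m Y).
Proof.
apply: discr_le0 => [|t]; first exact: psd_mxtrace_form_ge0.
have := psd_mxtrace_form_ge0 (X + t *: Y).
have -> : (X + t *: Y)^T = X^T + t *: Y^T by rewrite linearD linearZ.
rewrite !mulmxDl !mulmxDr -!scalemxAl -!scalemxAr !mxtraceD !mxtraceZ.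
have -> : \tr (Y^T *m A *m X) = \tr (X^T *m A *m Y).
  by rewrite -mxtrace_tr !trmx_mul trmxK (proj1 psdA) mulmxA.
by congr (0 <= _); ring.
Qed.

End PsdForm.

Lemma psd1 n : psd (1%:M : 'M[R]_n).
Proof.
split; first exact: trmx1.
by move=> x; rewrite mulmx1 -trace_mx11 mxtrace_tmul_ge0.
Qed.

Lemma mxtrace_tmul_le_frob m n (X Y : 'M[R]_(m, n)) : \tr (X^T *m Y) <= frob X * frob Y.
Proof.
have := psd_mxtrace_form_CS (psd1 m) X Y; rewrite !mulmx1 -!frob_sqr -exprMn => CS.
apply: le_trans (ler_norm _) _.
by rewrite -ler_sqr ?nnegrE ?normr_ge0 ?mulr_ge0 ?frob_ge0 // real_normK ?num_real.
Qed.

Lemma frobD m n (X Y : 'M[R]_(m, n)) : frob (X + Y) <= frob X + frob Y.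
Proof.
rewrite -ler_sqr ?nnegrE ?addr_ge0 ?frob_ge0 // sqrrD !frob_sqr.
have -> : (X + Y)^T = X^T + Y^T by rewrite linearD.
rewrite mulmxDl !mulmxDr !mxtraceD -[\tr (Y^T *m X)]mxtrace_tr trmx_mul trmxK.
have := mxtrace_tmul_le_frob X Y; rewrite mulr2n; lra.
Qed.

Lemma frobB m n (X Y : 'M[R]_(m, n)) : frob (X - Y) <= frob X + frob Y.
Proof. by rewrite -(frobN Y) frobD. Qed.

Lemma psd_tmul m n (A : 'M[R]_(m, n)) : psd (A^T *m A).
Proof.
split=> [|x]; first by rewrite /symmetric_mx trmx_mul trmxK.
by rewrite -trace_mx11 !mulmxA -trmx_mul -mulmxA mxtrace_tmul_ge0.
Qed.

Lemma orth_proj_psd n (E : 'M[R]_n) : orth_proj E -> psd E.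
Proof. by case=> symE idemE; rewrite -idemE -{1}symE; exact: psd_tmul. Qed.

Lemma orth_proj_compl n (E : 'M[R]_n) : orth_proj E -> orth_proj (1%:M - E).
Proof.
case=> symE idemE; split; first by rewrite linearB /= trmx1 symE.
by rewrite mulmxBl mul1mx mulmxBr mulmx1 idemE subrr subr0.
Qed.

Lemma psd_congr n p (A : 'M[R]_n) (X : 'M[R]_(n, p)) : psd A -> psd (X^T *m A *m X).
Proof.
case=> symA formA; split=> [|x]; first by rewrite /symmetric_mx !trmx_mul trmxK symA mulmxA.
by have := formA (X *m x); rewrite trmx_mul !mulmxA.
Qed.

Lemma frob_le_mxtrace n (A : 'M[R]_n) : psd A -> frob A <= \tr A.
Proof.
move=> psdA; have tr_ge0 : 0 <= \tr A.
  by have := psd_mxtrace_form_ge0 psdA 1%:M; rewrite trmx1 mul1mx mulmx1.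
rewrite -ler_sqr ?nnegrE ?frob_ge0 // frob_sqr mxtrace_tmul expr2 {2}/mxtrace mulr_suml.
apply: ler_sum => i _; rewrite mulr_sumr; apply: ler_sum => j _.
have := psd_mxtrace_form_CS psdA (delta_mx i 0 : 'cV_n) (delta_mx j 0).
by rewrite !trace_mx11 !trmx_delta !delta_mx_form.
Qed.

(* With X = B Y: tr (X^T X) = tr (X^T B Y), whose square is at most
   tr (X^T B X) tr (Y^T B Y) <= tr (X^T X) tr (Y^T B Y). *)
Lemma mxtrace_sqr_le n k (B : 'M[R]_n) (Y : 'M[R]_(n, k)) :
  psd B -> loewner_le B 1%:M -> \tr (Y^T *m (B *m B) *m Y) <= \tr (Y^T *m B *m Y).
Proof.
move=> psdB B_le1; set X := B *m Y.
have trX : X^T = Y^T *m B by rewrite /X trmx_mul (proj1 psdB).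
have -> : \tr (Y^T *m (B *m B) *m Y) = \tr (X^T *m X) by rewrite trX /X !mulmxA.
have := psd_mxtrace_form_CS psdB X Y.
have -> : \tr (X^T *m B *m Y) = \tr (X^T *m X) by rewrite /X !mulmxA.
have := psd_mxtrace_form_ge0 B_le1 X; rewrite mulmxBr mulmxBl mulmx1 raddfB subr_ge0.
have := psd_mxtrace_form_ge0 psdB X; have := psd_mxtrace_form_ge0 psdB Y.
have := mxtrace_tmul_ge0 X; nra.
Qed.

Lemma frob_orth_proj_mull m n (Q : 'M[R]_m) (X : 'M[R]_(m, n)) :
  orth_proj Q -> frob (Q *m X) <= frob X.
Proof.
move=> projQ; rewrite -ler_sqr ?nnegrE ?frob_ge0 // !frob_sqr.
have [symQ idemQ] := projQ.
rewrite trmx_mul -mulmxA (mulmxA Q^T) symQ idemQ mulmxA.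
have := psd_mxtrace_form_ge0 (orth_proj_psd (orth_proj_compl projQ)) X.
by rewrite mulmxBr mulmxBl mulmx1 raddfB subr_ge0.
Qed.

Lemma frob_proj_congr_le n (E A : 'M[R]_n) :
  orth_proj E -> psd A -> frob (E *m A *m E) <= \tr (A *m E).
Proof.
case=> symE idemE psdA; apply: le_trans (frob_le_mxtrace _) _.
  by have := psd_congr E psdA; rewrite symE.
by rewrite mxtrace_mulC mulmxA idemE mxtrace_mulC.
Qed.

Lemma frob_proj_offdiag_sqr n (Q E B : 'M[R]_n) :
  orth_proj Q -> orth_proj E -> psd B -> loewner_le B 1%:M ->
  frob (Q *m B *m E) ^+ 2 <= \tr (B *m E).
Proof.
move=> projQ [symE idemE] psdB B_le1.
apply: (@le_trans _ _ (frob (B *m E) ^+ 2)).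
  by rewrite ler_sqr ?nnegrE ?frob_ge0 // -mulmxA frob_orth_proj_mull.
rewrite frob_sqr trmx_mul (proj1 psdB) symE mulmxA -(mulmxA E B B).
have := mxtrace_sqr_le E psdB B_le1; rewrite symE => /le_trans; apply.
by rewrite mxtrace_mulC mulmxA idemE mxtrace_mulC.
Qed.

End FrobeniusPsd.

Definition spectral_mx (R : pzRingType) n (E : 'M[R]_n) (a b : R) : 'M[R]_n :=
  a *: (1%:M - E) + b *: E.

Section SpectralMx.
Variables (R : comPzRingType) (n : nat) (E : 'M[R]_n).
Hypothesis idemE : E *m E = E.
Local Notation Q := (1%:M - E).

Lemma compl_idem : Q *m Q = Q.
Proof. by rewrite mulmxBl mul1mx mulmxBr mulmx1 idemE subrr subr0. Qed.

Lemma spectral_mxE a b : spectral_mx E a b = a%:M + (b - a) *: E.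
Proof. by rewrite /spectral_mx scalerBr scalemx1 scalerBl addrA addrAC. Qed.

Lemma spectral_mx_scalar a : spectral_mx E a a = a%:M.
Proof. by rewrite spectral_mxE subrr scale0r addr0. Qed.

Lemma spectral_mxB a b a' b' :
  spectral_mx E a b - spectral_mx E a' b' = spectral_mx E (a - a') (b - b').
Proof. by rewrite /spectral_mx !scalerBl opprD addrACA. Qed.

Lemma spectral_mxM a b a' b' :
  spectral_mx E a b *m spectral_mx E a' b' = spectral_mx E (a * a') (b * b').
Proof.
have QE : Q *m E = 0 by rewrite mulmxBl mul1mx idemE subrr.
have EQ : E *m Q = 0 by rewrite mulmxBr mulmx1 idemE subrr.
rewrite /spectral_mx mulmxDl !mulmxDr -!scalemxAl -!scalemxAr compl_idem QE EQ idemE.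
by rewrite !scaler0 addr0 add0r !scalerA.
Qed.

Lemma spectral_mx_congr a b a' b' (M : 'M[R]_n) :
  spectral_mx E a b *m M *m spectral_mx E a' b' =
  (a * a') *: (Q *m M *m Q) + (a * b') *: (Q *m M *m E)
  + (b * a') *: (E *m M *m Q) + (b * b') *: (E *m M *m E).
Proof.
rewrite /spectral_mx; move: (1%:M - E) => Q'.
by rewrite !mulmxDl !mulmxDr -!scalemxAl -!scalemxAr !scalerA !addrA (mulrC b a').
Qed.

Lemma spectral_mx_congr_sub1 (c r : R) (Pi : 'M[R]_n) : (1 + r) * c ^+ 2 = 1 ->
  spectral_mx E 1 c *m (1%:M + r *: Pi) *m spectral_mx E 1 c - 1%:M =
  r *: (Q *m Pi *m Q - c *: (Q *m (1%:M - Pi) *m E + E *m (1%:M - Pi) *m Q)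
        - c ^+ 2 *: (E *m (1%:M - Pi) *m E)).
Proof.
move=> hc; set B := 1%:M - Pi.
have QBQ : Q *m B *m Q = Q - Q *m Pi *m Q.
  by rewrite [Q *m B]mulmxBr mulmx1 mulmxBl compl_idem.
have -> : 1%:M + r *: Pi = (1 + r) *: 1%:M - r *: B.
  by apply/matrixP => i j; rewrite !mxE; ring.
rewrite mulmxBr mulmxBl -!scalemxAr -!scalemxAl !mulmx1 spectral_mxM.
rewrite spectral_mx_congr QBQ /spectral_mx !mul1r -expr2 scalerDr !scalerA hc.
move: (Q *m Pi *m Q) (Q *m B *m E) (E *m B *m Q) (E *m B *m E) => A1 A2 A3 A4.
by apply/matrixP => i j; rewrite !mxE; ring.
Qed.

End SpectralMx.

Section SpectralMxField.
Variables (F : fieldType) (n : nat) (E : 'M[F]_n).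
Hypothesis idemE : E *m E = E.

Lemma invmx_spectral_mx a b : a != 0 -> b != 0 ->
  invmx (spectral_mx E a b) = spectral_mx E a^-1 b^-1.
Proof.
move=> a0 b0; have inv : spectral_mx E a b *m spectral_mx E a^-1 b^-1 = 1%:M.
  by rewrite (spectral_mxM idemE) !divff // spectral_mx_scalar.
have [unit_ab _] := mulmx1_unit inv.
by rewrite -[RHS]mul1mx -(mulVmx unit_ab) -mulmxA inv mulmx1.
Qed.

Lemma spectral_mx_comm (M : 'M[F]_n) a b a' b' : a != b ->
  M *m spectral_mx E a b = spectral_mx E a b *m M ->
  M *m spectral_mx E a' b' = spectral_mx E a' b' *m M.
Proof.
move=> neq_ab; rewrite !spectral_mxE !mulmxDr !mulmxDl scalar_mxC => /addrI.
rewrite -!scalemxAr -!scalemxAl => /scalemx_inj; rewrite subr_eq0 eq_sym => /(_ neq_ab) ME.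
by rewrite scalar_mxC ME.
Qed.

End SpectralMxField.

Section PsdSqrt.
Variable R : rcfType.

Lemma psd_spectral_mx n (E : 'M[R]_n) a b :
  orth_proj E -> 0 <= a -> 0 <= b -> psd (spectral_mx E a b).
Proof.
move=> projE a_ge0 b_ge0; have [[symE _] [symQ _]] := (projE, orth_proj_compl projE).
have [[_ formE] [_ formQ]] := (orth_proj_psd projE, orth_proj_psd (orth_proj_compl projE)).
split=> [|x]; first by rewrite /symmetric_mx /spectral_mx linearD !linearZ /= symQ symE.
rewrite /spectral_mx mulmxDr mulmxDl -!scalemxAr -!scalemxAl mxE.
by apply: addr_ge0; rewrite mxE mulr_ge0.
Qed.

(* (P + T) (P - T) = P^2 - T^2 = 0 by commutation, and P + T >= eps. *)
Lemma psd_sqrt_unique n (P T : 'M[R]_n) (eps : R) :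
  psd P -> 0 < eps -> loewner_le eps%:M T ->
  P *m T = T *m P -> P *m P = T *m T -> P = T.
Proof.
move=> psdP eps_gt0 T_ge_eps PT PP; apply/eqP; rewrite -subr_eq0; apply/eqP.
have : (P + T) *m (P - T) = 0.
  by rewrite mulmxBr !mulmxDl PP PT [T *m T + _]addrC subrr.
move: (P - T) => Y PTY.
have formT : eps * \tr (Y^T *m Y) <= \tr (Y^T *m T *m Y).
  have := psd_mxtrace_form_ge0 T_ge_eps Y.
  rewrite mulmxBr mulmxBl -scalemx1 -scalemxAr -scalemxAl mulmx1.
  by rewrite raddfB /= mxtraceZ subr_ge0.
have : \tr (Y^T *m P *m Y) + \tr (Y^T *m T *m Y) = 0.
  by rewrite -mxtraceD -mulmxDl -mulmxDr -mulmxA PTY mulmx0 mxtrace0.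
have := psd_mxtrace_form_ge0 psdP Y; have := mxtrace_tmul_ge0 Y => ? ? ?.
have : frob Y ^+ 2 = 0 by rewrite frob_sqr; nra.
by move/eqP; rewrite sqrf_eq0 => /eqP /frob0_eq0.
Qed.

Lemma psd_sqrt_spectral_mx n (E P : 'M[R]_n) (a b : R) :
  orth_proj E -> 0 < a -> 0 < b -> a != b ->
  psd P -> P *m P = spectral_mx E (a ^+ 2) (b ^+ 2) -> P = spectral_mx E a b.
Proof.
move=> projE a_gt0 b_gt0 neq_ab psdP PP; have idemE := proj2 projE.
apply: (@psd_sqrt_unique _ _ _ (Num.min a b)) => //.
- by rewrite lt_min a_gt0.
- rewrite /loewner_le -(spectral_mx_scalar E) spectral_mxB.
  by apply: psd_spectral_mx; rewrite // subr_ge0 ge_min lexx ?orbT.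
- apply: (spectral_mx_comm (a := a ^+ 2) (b := b ^+ 2)); last by rewrite -PP mulmxA.
  by rewrite eqrXn2 ?ltW.
- by rewrite PP spectral_mxM.
Qed.

End PsdSqrt.

Lemma inv_sqrt1D_bounds (R : rcfType) (rho : R) : 0 < rho -> rho <= 1 ->
  [/\ 0 < rho^-2, 0 < (Num.sqrt (1 + rho^-2))^-1, (Num.sqrt (1 + rho^-2))^-1 < 1,
      (1 + rho^-2) * ((Num.sqrt (1 + rho^-2))^-1) ^+ 2 = 1
    & rho^-2 * (Num.sqrt (1 + rho^-2))^-1 <= rho^-1].
Proof.
move=> rho_gt0 rho_le1; have rhoV_gt0 : 0 < rho^-1 by rewrite invr_gt0.
have rhoV2 : rho^-2 = rho^-1 ^+ 2 by rewrite exprVn.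
have r_gt0 : 0 < rho^-2 by rewrite rhoV2 exprn_gt0.
set s := Num.sqrt (1 + rho^-2).
have s_gt0 : 0 < s by rewrite sqrtr_gt0 addr_gt0.
have s2 : s ^+ 2 = 1 + rho^-2 by rewrite sqr_sqrtr // addr_ge0 ?ltW.
have rhoV_le_s : rho^-1 <= s.
  by rewrite -(ger0_norm (ltW rhoV_gt0)) -sqrtr_sqr -rhoV2 ler_wsqrtr // lerDr.
have c_gt0 : 0 < s^-1 by rewrite invr_gt0.
have hc : (1 + rho^-2) * s^-1 ^+ 2 = 1 by rewrite -s2 exprVn mulfV // gt_eqF ?exprn_gt0.
split => //; first by rewrite invf_lt1 //; nra.
rewrite rhoV2 expr2 -mulrA ler_piMr ?(ltW rhoV_gt0) //.
by rewrite ler_pdivrMr // mul1r.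
Qed.

Section ProjBlocks.
Variables (R : rcfType) (n : nat) (E Pi : 'M[R]_n) (delta : R).
Hypotheses (projE : orth_proj E) (psdPi : psd Pi) (Pi_le1 : loewner_le Pi 1%:M).
Hypotheses (delta_ge0 : 0 <= delta) (trPi : \tr Pi <= \tr E).
Hypothesis trB : \tr ((1%:M - Pi) *m E) <= delta ^+ 2.
Local Notation Q := (1%:M - E).
Local Notation B := (1%:M - Pi).

Lemma frob_compl_block_le : frob (Q *m Pi *m Q) <= delta ^+ 2.
Proof.
apply: le_trans (frob_proj_congr_le (orth_proj_compl projE) psdPi) _.
by apply: le_trans trB; rewrite mulmxBr mulmx1 mulmxBl mul1mx !raddfB /= lerD2r.
Qed.

Lemma frob_range_block_le : frob (E *m B *m E) <= delta ^+ 2.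
Proof. exact: le_trans (frob_proj_congr_le projE Pi_le1) trB. Qed.

Lemma frob_offdiag_block_le : frob (Q *m B *m E) <= delta.
Proof.
have B_le1 : loewner_le B 1%:M by rewrite /loewner_le opprB addrC subrK.
rewrite -ler_sqr ?nnegrE ?frob_ge0 //.
exact: le_trans (frob_proj_offdiag_sqr (orth_proj_compl projE) projE Pi_le1 B_le1) trB.
Qed.

Lemma frob_blocks_le (c : R) : 0 <= c ->
  frob (Q *m Pi *m Q - c *: (Q *m B *m E + E *m B *m Q) - c ^+ 2 *: (E *m B *m E))
  <= delta ^+ 2 + 2 * c * delta + c ^+ 2 * delta ^+ 2.
Proof.
move=> c_ge0; have [[symQ _] [symE _]] := (orth_proj_compl projE, projE).
have -> : E *m B *m Q = (Q *m B *m E)^T.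
  by rewrite !trmx_mul symQ symE (proj1 Pi_le1) mulmxA.
apply: le_trans (frobB _ _) _; rewrite frobZ ger0_norm ?exprn_ge0 //.
apply: lerD; last by rewrite ler_wpM2l ?exprn_ge0 ?frob_range_block_le.
apply: le_trans (frobB _ _) _; rewrite frobZ ger0_norm //.
apply: lerD; first exact: frob_compl_block_le.
rewrite -mulrA mulr2n mulrDl mul1r -mulrDr ler_wpM2l //.
by apply: le_trans (frobD _ _) _; rewrite frob_trmx lerD ?frob_offdiag_block_le.
Qed.

End ProjBlocks.

Unset Implicit Arguments.

Theorem lemma4 (R : rcfType) (d m : nat) (Pstar Pi S P : 'M[R]_d) (delta rho : R) :
  orth_proj Pstar -> \rank Pstar = m ->
  0 <= delta -> 0 < rho -> rho <= 1 ->
  Pdelta m delta Pstar Pi ->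
  is_psd_sqrt S (1%:M + rho^-2 *: Pi) ->
  is_psd_sqrt P (invmx (1%:M + rho^-2 *: Pstar)) ->
  frob (P *m (S *m S) *m P - 1%:M) <= 2 * delta ^+ 2 * rho^-2 + 2 * delta * rho^-1.
Proof.
move=> projE rankE delta_ge0 rho_gt0 rho_le1 [_ [trPi [Pi_ge0 [Pi_le1 trB]]]] [_ ->] [psdP PP].
rewrite /loewner_le subr0 in Pi_ge0.
have [r_gt0 c_gt0 c_lt1 hc rc_le] := inv_sqrt1D_bounds rho_gt0 rho_le1.
set r := rho^-2 in r_gt0 hc rc_le *.
set c := (Num.sqrt (1 + r))^-1 in c_gt0 c_lt1 hc rc_le *.
have idemE := proj2 projE.
have -> : P = spectral_mx Pstar 1 c.
  apply: psd_sqrt_spectral_mx; rewrite ?ltr01 ?(gt_eqF c_lt1) // PP expr1n.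
  have -> : 1%:M + r *: Pstar = spectral_mx Pstar 1 (1 + r).
    by rewrite spectral_mxE (addrC 1 r) addrK.
  by rewrite invmx_spectral_mx ?oner_neq0 ?invr1 ?(mulr1_eq hc) // gt_eqF ?addr_gt0.
have trPiE : \tr Pi <= \tr Pstar by rewrite (mxtrace_idem idemE) rankE.
rewrite spectral_mx_congr_sub1 // frobZ gtr0_norm //.
have blocks := frob_blocks_le projE Pi_ge0 Pi_le1 delta_ge0 trPiE trB (ltW c_gt0).
apply: le_trans (ler_wpM2l (ltW r_gt0) blocks) _.
have := ler_wpM2r delta_ge0 rc_le.
have : c ^+ 2 * delta ^+ 2 <= delta ^+ 2 by rewrite ler_piMl ?sqr_ge0 ?expr_le1 ?ltW.
move/(ler_wpM2l (ltW r_gt0)); lra.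
Qed.
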